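(* Let $(\mathfrak H_{-,+},\mathfrak H,\Gamma_0,\Gamma_1)$ be an m-boundary tuple for $\mathcal A^*$, where $\mathcal A$ is a closed densely defined symmetric operator in a Hilbert space $\mathfrak X$. Let $V$ be an arbitrary linear homeomorphism from $\mathfrak H$ onto $\mathfrak H_{-,+}$. Then $(\mathfrak H,V^{-1}\Gamma_0,V^\#\Gamma_1)$ is a boundary triple for $\mathcal A^*$.
   Context: Mixed-order duality: Hilbert spaces $\mathfrak H,\mathfrak H_{-,+},\mathfrak H_{+,-}$ with $\widetilde{\mathfrak H}_{\mp,\pm}:=\mathfrak H\cap\mathfrak H_{\mp,\pm}$ dense in $\mathfrak H$ and in $\mathfrak H_{\mp,\pm}$, forms $\|h\|^2_{\mathfrak H_{\mp,\pm}}$ on $\widetilde{\mathfrak H}_{\mp,\pm}$ closed in $\mathfrak H$, and $\|h\|_{\mathfrak H_{\pm,\mp}}=\sup_{0\ne g\in\widetilde{\mathfrak H}_{\mp,\pm}}|(g|h)_{\mathfrak H}|/\|g\|_{\mathfrak H_{\mp,\pm}}$ for $h\in\widetilde{\mathfrak H}_{\pm,\mp}$; $\langle\cdot|\cdot\rangle_{\mathfrak H}$ is the unique bounded sesquilinear extension of $(\cdot|\cdot)_{\mathfrak H}$ to $\mathfrak H_{-,+}\times\mathfrak H_{+,-}$, with $\langle h_{+,-}|h_{-,+}\rangle_{\mathfrak H}:=\overline{\langle h_{-,+}|h_{+,-}\rangle_{\mathfrak H}}$. An m-boundary tuple for $\mathcal A^*$ is $(\mathfrak H_{-,+},\mathfrak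 H,\Gamma_0,\Gamma_1)$ with linear $\Gamma_0:\mathrm{dom}\mathcal A^*\to\mathfrak H_{-,+}$, $\Gamma_1:\mathrm{dom}\mathcal A^*\to\mathfrak H_{+,-}$ such that (M1) $f\mapsto\{\Gamma_0f,\Gamma_1f\}$ maps $\mathrm{dom}\mathcal A^*$ onto $\mathfrak H_{-,+}\oplus\mathfrak H_{+,-}$ and (M2) $(\mathcal A^*f|g)_{\mathfrak X}-(f|\mathcal A^*g)_{\mathfrak X}=\langle\Gamma_1f|\Gamma_0g\rangle_{\mathfrak H}-\langle\Gamma_0f|\Gamma_1g\rangle_{\mathfrak H}$ for all $f,g$. The $\mathfrak H$-pairing-adjoint of $V$ is $V^\#:\mathfrak H_{+,-}\to\mathfrak H$ with $\langle Vf|g\rangle_{\mathfrak H}=(f|V^\#g)_{\mathfrak H}$ for $f\in\mathfrak H$, $g\in\mathfrak H_{+,-}$. A boundary triple $(\mathfrak H,\widehat\Gamma_0,\widehat\Gamma_1)$ for $\mathcal A^*$ consists of linear maps $\widehat\Gamma_j:\mathrm{dom}\mathcal A^*\to\mathfrak H$ such that $f\mapsto\{\widehat\Gamma_0f,\widehat\Gamma_1f\}$ maps $\mathrm{dom}\mathcal A^*$ onto $\mathfrak H\oplus\mathfrak H$ and $(\mathcal A^*f|g)_{\mathfrak X}-(f|\mathcal A^*g)_{\mathfrak X}=(\widehat\Gamma_1f|\widehat\Gamma_0g)_{\mathfrak H}-(\widehat\Gamma_0f|\widehat\Gamma_1g)_{\mathfrak H}$ for all $f,g\in\mathrm{dom}\mathcal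 A^*$. *)

From mathcomp Require Import all_boot all_order all_algebra.
From mathcomp Require Export complex.
From mathcomp Require Export reals.
Import Order.TTheory GRing.Theory Num.Theory.

Set Implicit Arguments.
Unset Strict Implicit.
Unset Printing Implicit Defensive.

Local Open Scope ring_scope.

Section Defs.
Variable R : realType.
Local Notation C := R[i].

Definition cconj (z : C) : C := conjc z.
Definition cabs (z : C) : R :=
  Num.sqrt (complex.Re z ^+ 2 + complex.Im z ^+ 2).

Section Space.
Variable W : lmodType C.
Implicit Types (P : W -> Prop) (ip : W -> W -> C).

Definition subspace P : Prop :=
  P 0 /\ (forall (a : C) x y, P x -> P y -> P (a *: x + y)).

Definition inner_product_on P ip : Prop :=
  (forall (a : C) x y z, P x -> P y -> P z ->
      ip (a *: x + y) z = a * ip x z + ip y z) /\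
  (forall x y, P x -> P y -> ip y x = cconj (ip x y)) /\
  (forall x, P x -> x <> 0 -> 0 < ip x x).

Definition ipnorm ip (x : W) : R := Num.sqrt (complex.Re (ip x x)).

Definition cauchy_seq (n : W -> R) (u : nat -> W) : Prop :=
  forall e : R, 0 < e -> exists N : nat, forall m k : nat,
    (N <= m)%N -> (N <= k)%N -> n (u m - u k) < e.

Definition converges_to (n : W -> R) (u : nat -> W) (l : W) : Prop :=
  forall e : R, 0 < e -> exists N : nat, forall m : nat,
    (N <= m)%N -> n (u m - l) < e.

Definition complete_on P (n : W -> R) : Prop :=
  forall u : nat -> W, (forall k, P (u k)) -> cauchy_seq n u ->
    exists l, P l /\ converges_to n u l.

Definition hilbert_on P ip : Prop :=
  [/\ subspace P, inner_product_on P ip & complete_on P (ipnorm ip)].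

Definition dense_in (D P : W -> Prop) (n : W -> R) : Prop :=
  forall x, P x -> forall e : R, 0 < e -> exists y, D y /\ n (x - y) < e.

Definition closed_form_in (P : W -> Prop) (nP : W -> R)
    (D : W -> Prop) (t : W -> R) : Prop :=
  forall (u : nat -> W) (x : W), (forall k, D (u k)) -> P x ->
    converges_to nP u x ->
    (forall e : R, 0 < e -> exists N : nat, forall m k : nat,
        (N <= m)%N -> (N <= k)%N -> t (u m - u k) < e) ->
    D x /\ (forall e : R, 0 < e -> exists N : nat, forall m : nat,
        (N <= m)%N -> t (u m - x) < e).

Definition is_sup_of (S : R -> Prop) (s : R) : Prop :=
  (forall r, S r -> r <= s) /\ (forall b, (forall r, S r -> r <= b) -> s <= b).

(* Mixed-order duality (see context).  PH, Pmp, Ppm are the Hilbert spaces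
   H, H_{-,+}, H_{+,-}, realised as subspaces of a common ambient space W,
   with inner products ipH, ipmp, ippm. *)
Definition tilde (PH P : W -> Prop) : W -> Prop := fun x => PH x /\ P x.

Definition mixed_order_duality (PH Pmp Ppm : W -> Prop)
    (ipH ipmp ippm : W -> W -> C) : Prop :=
  [/\ [/\ hilbert_on PH ipH, hilbert_on Pmp ipmp & hilbert_on Ppm ippm],
      [/\ dense_in (tilde PH Pmp) PH (ipnorm ipH),
          dense_in (tilde PH Pmp) Pmp (ipnorm ipmp),
          dense_in (tilde PH Ppm) PH (ipnorm ipH) &
          dense_in (tilde PH Ppm) Ppm (ipnorm ippm)],
      closed_form_in PH (ipnorm ipH) (tilde PH Pmp)
         (fun h => ipnorm ipmp h ^+ 2) /\
      closed_form_in PH (ipnorm ipH) (tilde PH Ppm)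
         (fun h => ipnorm ippm h ^+ 2) &
      (forall h, tilde PH Ppm h ->
         is_sup_of (fun r => exists g, [/\ tilde PH Pmp g, g <> 0 &
                      r = cabs (ipH g h) / ipnorm ipmp g])
                   (ipnorm ippm h)) /\
      (forall h, tilde PH Pmp h ->
         is_sup_of (fun r => exists g, [/\ tilde PH Ppm g, g <> 0 &
                      r = cabs (ipH g h) / ipnorm ippm g])
                   (ipnorm ipmp h))].

Definition pairing_extension (PH Pmp Ppm : W -> Prop)
    (ipH ipmp ippm : W -> W -> C) (pair : W -> W -> C) : Prop :=
  [/\ (forall (a : C) x y z, Pmp x -> Pmp y -> Ppm z ->
         pair (a *: x + y) z = a * pair x z + pair y z),
      (forall (a : C) x y z, Pmp x -> Ppm y -> Ppm z ->
         pair x (a *: y + z) = cconj a * pair x y + pair x z),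
      (exists c : R, forall x y, Pmp x -> Ppm y ->
         cabs (pair x y) <= c * ipnorm ipmp x * ipnorm ippm y) &
      (forall x y, tilde PH Pmp x -> tilde PH Ppm y -> pair x y = ipH x y)].

Definition pair_rev (pair : W -> W -> C) (hpm hmp : W) : C :=
  cconj (pair hmp hpm).

Definition pairing_adjoint (PH Ppm : W -> Prop) (ipH pair : W -> W -> C)
    (V Vsharp : W -> W) : Prop :=
  (forall g, Ppm g -> PH (Vsharp g)) /\
  (forall f g, PH f -> Ppm g -> pair (V f) g = ipH f (Vsharp g)).

Definition linear_homeomorphism (P : W -> Prop) (nP : W -> R)
    (Q : W -> Prop) (nQ : W -> R) (V : W -> W) : Prop :=
  [/\ (forall x, P x -> Q (V x)) /\
      (forall (a : C) x y, P x -> P y -> V (a *: x + y) = a *: V x + V y),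
      (forall x y, P x -> P y -> V x = V y -> x = y),
      (forall y, Q y -> exists x, P x /\ V x = y),
      (forall x0, P x0 -> forall e : R, 0 < e -> exists d : R, 0 < d /\
         forall x, P x -> nP (x - x0) < d -> nQ (V x - V x0) < e) &
      (forall x0, P x0 -> forall e : R, 0 < e -> exists d : R, 0 < d /\
         forall x, P x -> nQ (V x - V x0) < d -> nP (x - x0) < e)].

Definition inverse_on (P Q : W -> Prop) (V Vinv : W -> W) : Prop :=
  (forall x, P x -> Vinv (V x) = x) /\
  (forall y, Q y -> P (Vinv y) /\ V (Vinv y) = y).

End Space.

Section Operator.
Variable X : lmodType C.
Variable ipX : X -> X -> C.

Definition densely_defined (DA : X -> Prop) : Prop :=
  forall x : X, forall e : R, 0 < e -> exists y, DA y /\ ipnorm ipX (x - y) < e.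

Definition operator (DA : X -> Prop) (A : X -> X) : Prop :=
  subspace DA /\ (forall (a : C) x y, DA x -> DA y -> A (a *: x + y) = a *: A x + A y).

Definition closed_operator (DA : X -> Prop) (A : X -> X) : Prop :=
  forall (u : nat -> X) (x y : X), (forall k, DA (u k)) ->
    converges_to (ipnorm ipX) u x -> converges_to (ipnorm ipX) (A \o u) y ->
    DA x /\ A x = y.

Definition symmetric_op (DA : X -> Prop) (A : X -> X) : Prop :=
  forall x y, DA x -> DA y -> ipX (A x) y = ipX x (A y).

Definition closed_densely_defined_symmetric (DA : X -> Prop) (A : X -> X) : Prop :=
  [/\ operator DA A, densely_defined DA, closed_operator DA A & symmetric_op DA A].

Definition adj_dom (DA : X -> Prop) (A : X -> X) (f : X) : Prop :=
  exists h : X, forall g, DA g -> ipX (A g) f = ipX g h.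

Definition is_adjoint (DA : X -> Prop) (A : X -> X) (Astar : X -> X) : Prop :=
  forall f, adj_dom DA A f -> forall g, DA g -> ipX (A g) f = ipX g (Astar f).

Section Tuples.
Variable W : lmodType C.

Definition m_boundary_tuple (DA : X -> Prop) (A Astar : X -> X)
    (Pmp Ppm : W -> Prop) (pair : W -> W -> C) (G0 G1 : X -> W) : Prop :=
  let D := adj_dom DA A in
  [/\ (forall f, D f -> Pmp (G0 f) /\ Ppm (G1 f)),
      (forall (a : C) f g, D f -> D g ->
         G0 (a *: f + g) = a *: G0 f + G0 g /\ G1 (a *: f + g) = a *: G1 f + G1 g),
      (forall h0 h1, Pmp h0 -> Ppm h1 -> exists f, [/\ D f, G0 f = h0 & G1 f = h1]) &
      (forall f g, D f -> D g ->
         ipX (Astar f) g - ipX f (Astar g) =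
         pair_rev pair (G1 f) (G0 g) - pair (G0 f) (G1 g))].

Definition boundary_triple (DA : X -> Prop) (A Astar : X -> X)
    (PH : W -> Prop) (ipH : W -> W -> C) (Gh0 Gh1 : X -> W) : Prop :=
  let D := adj_dom DA A in
  [/\ (forall f, D f -> PH (Gh0 f) /\ PH (Gh1 f)),
      (forall (a : C) f g, D f -> D g ->
         Gh0 (a *: f + g) = a *: Gh0 f + Gh0 g /\
         Gh1 (a *: f + g) = a *: Gh1 f + Gh1 g),
      (forall h0 h1, PH h0 -> PH h1 -> exists f, [/\ D f, Gh0 f = h0 & Gh1 f = h1]) &
      (forall f g, D f -> D g ->
         ipX (Astar f) g - ipX f (Astar g) =
         ipH (Gh1 f) (Gh0 g) - ipH (Gh0 f) (Gh1 g))].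
End Tuples.
End Operator.
End Defs.

(* Everything except the surjectivity of the boundary map is transported through V:
   V^-1 and V^# are linear, (M1) is pulled back along the bijection V, and Green's
   identity follows from <y | g>_H = (V^-1 y | V^# g)_H.  For surjectivity, given
   h in H the functional y |-> (V^-1 y | h)_H is continuous on H_{-,+}, so it suffices
   that every such functional is y |-> <y | g>_H for some g in H_{+,-}; then V^# g = h.
   This is the content of mixed-order duality.  By Riesz, <. | h>_H = (. | J h)_{-,+}
   for some J h in H_{-,+}; density and the duality of norms give
   ||h||_{+,-} <= ||J h||_{-,+} <= c ||h||_{+,-}, so J has closed range, and the
   pairing is nondegenerate on H_{-,+}, so that range has trivial orthogonal
   complement.  Hence J is onto, and Riesz in H_{-,+} yields the representation. *)

From mathcomp Require Import all_boot all_order all_algebra.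
From mathcomp Require Import complex reals.
From mathcomp Require Import ring lra.
From mathcomp Require Import boolp classical_sets archimedean.
Import Order.TTheory GRing.Theory Num.Theory.
Local Open Scope ring_scope.
Set Implicit Arguments.
Unset Strict Implicit.

Section RealFacts.
Variable R : realType.

Lemma le_of_sqr_le (a b : R) : 0 <= b -> a ^+ 2 <= b ^+ 2 -> a <= b.
Proof. by move=> *; nra. Qed.

Lemma ler_addMgt0r (K a b : R) : (forall d, 0 < d -> a <= b + K * d) -> a <= b.
Proof.
move=> h; apply/ler_addgt0Pr => e he.
have [K0|K_gt0] := lerP K 0.
  by apply: le_trans (h e he) _; rewrite lerD2l; nra.
by have := h (e / K) (divr_gt0 he K_gt0); rewrite mulrC divfK ?gt_eqF.
Qed.

Lemma eventually_invS_lt (e : R) : 0 < e ->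
  exists N : nat, forall k, (N <= k)%N -> k.+1%:R^-1 < e.
Proof.
move=> e_gt0; exists (Num.bound e^-1) => k Nk.
have einv_ge0 : 0 <= e^-1 by rewrite invr_ge0 ltW.
have bound_gt := archi_boundP einv_ge0.
rewrite invf_plt ?posrE ?ltr0Sn //; apply: lt_le_trans bound_gt _.
by rewrite ler_nat (leq_trans Nk).
Qed.

End RealFacts.

Section ComplexModulus.
Variable R : realType.
Implicit Types z w : R[i].

Lemma cabsE z : cabs z = ComplexField.Normc.normc z.
Proof. by case: z. Qed.

Lemma cabs_ge0 z : 0 <= cabs z. Proof. exact: sqrtr_ge0. Qed.

Lemma cabs_sqr z : cabs z ^+ 2 = complex.Re z ^+ 2 + complex.Im z ^+ 2.
Proof. by rewrite /cabs sqr_sqrtr // addr_ge0 // sqr_ge0. Qed.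

Lemma cabs_eq0 z : cabs z = 0 -> z = 0.
Proof. by rewrite cabsE => /ComplexField.Normc.eq0_normc. Qed.

Lemma cabs_conj z : cabs (conjc z) = cabs z.
Proof. by case: z => a b; rewrite /cabs /= sqrrN. Qed.

Lemma cabsM z w : cabs (z * w) = cabs z * cabs w.
Proof. by rewrite !cabsE ComplexField.Normc.normcM. Qed.

Lemma cabsN1 : cabs (-1) = 1 :> R.
Proof. by rewrite /cabs /= oppr0 expr0n /= addr0 sqrrN expr1n sqrtr1. Qed.

Lemma cabsD_le z w : cabs (z + w) <= cabs z + cabs w.
Proof. by rewrite !cabsE; apply: le_normcD. Qed.

Lemma cabsB_le z w : cabs (z - w) <= cabs z + cabs w.
Proof. by rewrite [cabs w in X in _ <= X]cabsE -normcN -cabsE cabsD_le. Qed.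

Lemma Re_le_cabs z : complex.Re z <= cabs z.
Proof. by apply: le_of_sqr_le; rewrite ?cabs_ge0 // cabs_sqr lerDl sqr_ge0. Qed.

Lemma cabs_small_eq0 (K : R) z : (forall d, 0 < d -> cabs z <= K * d) -> z = 0.
Proof.
move=> small; apply: cabs_eq0; apply/eqP; rewrite eq_le cabs_ge0 andbT.
by apply: (ler_addMgt0r (K := K)) => d /small; rewrite add0r.
Qed.

End ComplexModulus.

Section Subspace.
Variables (R : realType) (W : lmodType R[i]) (P : W -> Prop).
Hypothesis sP : subspace P.

Lemma subspace0 : P 0. Proof. by case: sP. Qed.

Lemma subspaceZD a x y : P x -> P y -> P (a *: x + y).
Proof. by case: sP => _; apply. Qed.

Lemma subspaceD x y : P x -> P y -> P (x + y).
Proof. by move=> Px Py; rewrite -[x]scale1r; apply: subspaceZD. Qed.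

Lemma subspaceZ a x : P x -> P (a *: x).
Proof. by move=> Px; rewrite -[_ *: _]addr0; apply: subspaceZD => //; exact: subspace0. Qed.

Lemma subspaceB x y : P x -> P y -> P (x - y).
Proof. by move=> Px Py; rewrite -scaleN1r addrC; apply: subspaceZD. Qed.

End Subspace.

Section InnerProduct.
Variables (R : realType) (W : lmodType R[i]) (P : W -> Prop) (ip : W -> W -> R[i]).
Hypotheses (sP : subspace P) (ipP : inner_product_on P ip).
Local Notation nm := (ipnorm ip).
Let P0 : P 0 := subspace0 sP.

Lemma ipZDl a x y z : P x -> P y -> P z -> ip (a *: x + y) z = a * ip x z + ip y z.
Proof. by case: ipP => ZD _; apply: ZD. Qed.

Lemma ip_conj x y : P x -> P y -> ip y x = conjc (ip x y).
Proof. by case: ipP => _ [conj _]; apply: conj. Qed.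

Lemma ip0l z : P z -> ip 0 z = 0.
Proof.
move=> Pz; have := ipZDl 1 P0 P0 Pz.
by rewrite scaler0 addr0 mul1r -{1}[ip 0 z]addr0 => /addrI <-.
Qed.

Lemma ipZl a x z : P x -> P z -> ip (a *: x) z = a * ip x z.
Proof. by move=> Px Pz; rewrite -[_ *: _]addr0 ipZDl ?ip0l ?addr0. Qed.

Lemma ipDl x y z : P x -> P y -> P z -> ip (x + y) z = ip x z + ip y z.
Proof. by move=> Px Py Pz; rewrite -[x in LHS]scale1r ipZDl // mul1r. Qed.

Lemma ipBl x y z : P x -> P y -> P z -> ip (x - y) z = ip x z - ip y z.
Proof. by move=> Px Py Pz; rewrite -scaleN1r addrC ipZDl // mulN1r addrC. Qed.

Lemma ipZDr a x y z : P x -> P y -> P z ->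
  ip z (a *: x + y) = conjc a * ip z x + ip z y.
Proof.
move=> Px Py Pz; have Paxy := subspaceZD sP a Px Py.
rewrite ip_conj // ipZDl //.
by rewrite rmorphD rmorphM /= -!ip_conj.
Qed.

Lemma ip0r z : P z -> ip z 0 = 0.
Proof. by move=> Pz; rewrite ip_conj ?ip0l ?rmorph0. Qed.

Lemma ipZr a x z : P x -> P z -> ip z (a *: x) = conjc a * ip z x.
Proof. by move=> Px Pz; rewrite -[_ *: _]addr0 ipZDr ?ip0r ?addr0. Qed.

Lemma ipDr x y z : P x -> P y -> P z -> ip z (x + y) = ip z x + ip z y.
Proof. by move=> Px Py Pz; rewrite -[x in LHS]scale1r ipZDr // rmorph1 mul1r. Qed.

Lemma ipBr x y z : P x -> P y -> P z -> ip z (x - y) = ip z x - ip z y.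
Proof.
by move=> Px Py Pz; rewrite -scaleN1r addrC ipZDr // rmorphN1 mulN1r addrC.
Qed.

Lemma ipnorm_ge0 x : 0 <= nm x. Proof. exact: sqrtr_ge0. Qed.

Lemma ipxx x : P x -> ip x x = ((nm x ^+ 2)%:C)%C.
Proof.
move=> Px; have Re_ge0 : 0 <= complex.Re (ip x x).
  have [->|x_neq0] := eqVneq x 0; first by rewrite ip0l.
  by case: ipP => _ [_ /(_ x Px (elimN eqP x_neq0))]; rewrite ltcE => /andP[_ /ltW].
have := ip_conj Px Px; rewrite /ipnorm sqr_sqrtr //.
by case: (ip x x) => a b /= [] Im0; rewrite (_ : b = 0) //; lra.
Qed.

Lemma ipnorm_eq0 x : P x -> nm x = 0 -> x = 0.
Proof.
move=> Px nx0; apply/eqP/negPn/negP => /eqP x_neq0.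
case: ipP => _ [_ /(_ x Px x_neq0)]; rewrite ipxx // nx0 expr0n /=.
by rewrite ltcE /= ltxx andbF.
Qed.

Lemma ipnorm_gt0 x : P x -> x <> 0 -> 0 < nm x.
Proof.
by move=> Px x_neq0; rewrite lt0r ipnorm_ge0 andbT; apply/eqP => /(ipnorm_eq0 Px).
Qed.

Lemma ip_inj_r w1 w2 : P w1 -> P w2 ->
  (forall f, P f -> ip f w1 = ip f w2) -> w1 = w2.
Proof.
move=> P1 P2 same; apply/eqP; rewrite -subr_eq0; apply/eqP.
have P12 := subspaceB sP P1 P2; apply: ipnorm_eq0 => //.
have : ip (w1 - w2) (w1 - w2) = 0 by rewrite ipBr // same // subrr.
by rewrite ipxx // => /(congr1 (@complex.Re R)) /= /eqP; rewrite sqrf_eq0 => /eqP.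
Qed.

(* The cross term is [2 Re (t * conj (ip w u))]. *)
Lemma ipnorm_sqrDZ w u t : P w -> P u -> nm (w + t *: u) ^+ 2 =
  nm w ^+ 2 + 2 * (complex.Re t * complex.Re (ip w u) + complex.Im t * complex.Im (ip w u))
  + cabs t ^+ 2 * nm u ^+ 2.
Proof.
move=> Pw Pu; have Ptu := subspaceZ sP t Pu; have Pwtu := subspaceD sP Pw Ptu.
have := ipxx Pwtu; rewrite ipDl // !ipDr // !ipZl // !ipZr // (ip_conj Pw Pu).
rewrite (ipxx Pw) (ipxx Pu) cabs_sqr => /(congr1 (@complex.Re R)) /= <-.
by clear Ptu Pwtu; case: t => a b; case: (ip w u) => c d /=; ring.
Qed.

Lemma ipnormZ t u : P u -> nm (t *: u) = cabs t * nm u.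
Proof.
move=> Pu; apply/eqP; rewrite -(eqrXn2 (n := 2)) ?mulr_ge0 ?cabs_ge0 ?ipnorm_ge0 //.
have := ipnorm_sqrDZ t P0 Pu.
rewrite add0r ip0l //= !mulr0 addr0 exprMn => ->.
by rewrite /ipnorm ip0l //= sqrtr0 expr0n mulr0 !add0r.
Qed.

Lemma ipnormBC x y : P x -> P y -> nm (x - y) = nm (y - x).
Proof.
move=> Px Py; have Pyx := subspaceB sP Py Px.
rewrite -opprB -[- (y - x)]scaleN1r ipnormZ //.
by rewrite cabsN1 mul1r.
Qed.

Lemma ip_cauchy_schwarz w u : P w -> P u -> cabs (ip w u) <= nm w * nm u.
Proof.
move=> Pw Pu; apply: le_of_sqr_le; first by rewrite mulr_ge0 ?ipnorm_ge0.
have [u0|u_neq0] := eqVneq (nm u) 0.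
  by rewrite (ipnorm_eq0 Pu u0) ip0r // /cabs /= expr0n /= addr0 sqrtr0 expr0n /= sqr_ge0.
have q_gt0 : 0 < nm u ^+ 2 by rewrite exprn_gt0 // lt0r u_neq0 ipnorm_ge0.
set q := nm u ^+ 2 in q_gt0 *; rewrite cabs_sqr exprMn.
case E: (ip w u) => [a b] /=.
have := sqr_ge0 (nm (w + Complex (- a / q) (- b / q) *: u)).
rewrite ipnorm_sqrDZ // E cabs_sqr /= -/q.
have -> : nm w ^+ 2 + 2 * (- a / q * a + - b / q * b) +
   ((- a / q) ^+ 2 + (- b / q) ^+ 2) * q = (nm w ^+ 2 * q - (a ^+ 2 + b ^+ 2)) / q.
  by field; rewrite gt_eqF.
by rewrite pmulr_lge0 ?invr_gt0 // subr_ge0.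
Qed.

Lemma ipnormD_le w u : P w -> P u -> nm (w + u) <= nm w + nm u.
Proof.
move=> Pw Pu; apply: le_of_sqr_le; first by rewrite addr_ge0 ?ipnorm_ge0.
have := ipnorm_sqrDZ 1 Pw Pu; rewrite scale1r => ->.
have := le_trans (Re_le_cabs (ip w u)) (ip_cauchy_schwarz Pw Pu).
rewrite /cabs /= expr0n /= expr1n addr0 sqrtr1; lra.
Qed.

Lemma ipnorm_parallelogram a b : P a -> P b ->
  nm (a + b) ^+ 2 + nm (a - b) ^+ 2 = 2 * nm a ^+ 2 + 2 * nm b ^+ 2.
Proof.
move=> Pa Pb; have := ipnorm_sqrDZ 1 Pa Pb; have := ipnorm_sqrDZ (-1) Pa Pb.
rewrite scale1r scaleN1r cabsN1 /cabs /= expr0n /= expr1n addr0 sqrtr1 => -> ->.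
ring.
Qed.

Lemma converges_cauchy u x : (forall k, P (u k)) -> P x ->
  converges_to nm u x -> cauchy_seq nm u.
Proof.
move=> Pu Px ux e e_gt0; have [N uN] := ux _ (divr_gt0 e_gt0 (ltr0Sn _ 1)).
exists N => a b Na Nb; have := ipnormD_le (subspaceB sP (Pu a) Px) (subspaceB sP Px (Pu b)).
rewrite addrA subrK (ipnormBC Px (Pu b)) => tri.
by have := uN _ Na; have := uN _ Nb; lra.
Qed.

End InnerProduct.

Section Projection.
Variables (R : realType) (W : lmodType R[i]) (P : W -> Prop) (ip : W -> W -> R[i]).
Hypotheses (sP : subspace P) (ipP : inner_product_on P ip) (cP : complete_on P (ipnorm ip)).
Local Notation nm := (ipnorm ip).
Variable M : W -> Prop.
Hypotheses (sM : subspace M) (MP : forall x, M x -> P x).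
Hypothesis M_closed :
  forall u x, (forall k, M (u k)) -> P x -> converges_to nm u x -> M x.

Lemma min_dist_orthogonal x m : P x -> M m ->
    (forall m', M m' -> nm (x - m) <= nm (x - m')) ->
  forall u, M u -> ip (x - m) u = 0.
Proof.
move=> Px Mm m_min u Mu; have Pw := subspaceB sP Px (MP Mm); have Pu := MP Mu.
set w := x - m in Pw m_min *; set z := ip w u.
pose s := (nm u ^+ 2 + 1)^-1.
have q_ge0 := sqr_ge0 (nm u).
have q1_gt0 : 0 < nm u ^+ 2 + 1 by lra.
have s_gt0 : 0 < s by rewrite invr_gt0.
have su_lt1 : s * nm u ^+ 2 < 1.
  have : s * (nm u ^+ 2 + 1) = 1 by rewrite mulVf ?gt_eqF.
  by move: (nm u ^+ 2) s_gt0 => q; nra.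
have := m_min (m - ((- s%:C)%C * z) *: u) (subspaceB sM Mm (subspaceZ sM _ Mu)).
rewrite opprB addrA addrAC -/w -(ler_pXn2r (_ : 0 < 2)%N) ?nnegrE ?ipnorm_ge0 //.
rewrite (ipnorm_sqrDZ sP ipP) // -/z cabsM exprMn.
have -> : cabs (- s%:C)%C = s.
  by rewrite /cabs /= oppr0 expr0n addr0 sqrrN sqrtr_sqr gtr0_norm.
have -> : complex.Re ((- s%:C)%C * z) * complex.Re z +
    complex.Im ((- s%:C)%C * z) * complex.Im z = - s * cabs z ^+ 2.
  by rewrite cabs_sqr; case: (z) => a b /=; ring.
move=> ineq; have : cabs z ^+ 2 * (s * (2 - s * nm u ^+ 2)) <= 0.
  by move: ineq; clearbody s; move: (cabs z ^+ 2) (nm w ^+ 2) (nm u ^+ 2) => c n q; nra.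
rewrite pmulr_lle0 ?mulr_gt0 ?subr_gt0 ?(lt_trans su_lt1) ?ltr1n //.
by move=> c_le0; apply/cabs_eq0/eqP; rewrite -sqrf_eq0 eq_le c_le0 sqr_ge0.
Qed.

Section MinimalDistance.
Variables (x : W) (dist : R).
Hypotheses (Px : P x) (dist_ge0 : 0 <= dist).
Hypothesis dist_lb : forall m, M m -> dist <= nm (x - m).

(* The parallelogram law for [x - m1] and [x - m2]: their half sum is [x] minus a point of [M]. *)
Lemma min_dist_parallelogram m1 m2 : M m1 -> M m2 ->
  nm (m1 - m2) ^+ 2 <= 2 * nm (x - m1) ^+ 2 + 2 * nm (x - m2) ^+ 2 - 4 * dist ^+ 2.
Proof.
move=> M1 M2; have P1 := subspaceB sP Px (MP M1); have P2 := subspaceB sP Px (MP M2).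
have two_neq0 : (2 : R[i]) != 0 by rewrite pnatr_eq0.
pose v := 2^-1 *: (m1 + m2).
have mid : (x - m1) + (x - m2) = 2 *: (x - v).
  by rewrite scalerBr scalerA mulfV // scale1r scaler_nat mulr2n opprD addrACA.
have Mv : M v := subspaceZ sM _ (subspaceD sM M1 M2).
have := ipnorm_parallelogram sP ipP P1 P2.
rewrite mid (ipnormZ sP ipP _ (subspaceB sP Px (MP Mv))).
have -> : x - m1 - (x - m2) = m2 - m1 by rewrite opprB addrC addrA subrK.
rewrite (ipnormBC sP ipP (MP M2) (MP M1)) cabsE normcMn ComplexField.Normc.normc1.
have := dist_lb Mv; have := ipnorm_ge0 ip (x - v).
move: (nm (x - v)) => n n_ge0 lb; have : dist ^+ 2 <= n ^+ 2 by rewrite ler_pXn2r ?nnegrE.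
by move: (nm (m1 - m2)) (nm (x - m1)) (nm (x - m2)) => a b c; nra.
Qed.

Lemma minimizing_seq_cauchy (mk : nat -> W) : (forall k, M (mk k)) ->
    (forall k, nm (x - mk k) < dist + k.+1%:R^-1) ->
  cauchy_seq nm mk.
Proof.
move=> Mk mk_min e e_gt0.
have K_gt0 : 0 < 8 * dist + 4 by rewrite ltr_wpDl ?mulr_ge0.
have [N Nbound] := eventually_invS_lt (divr_gt0 (exprn_gt0 2 e_gt0) K_gt0).
exists N => a b Na Nb; rewrite -(ltr_pXn2r (_ : 0 < 2)%N) ?nnegrE ?ipnorm_ge0 ?ltW //.
apply: le_lt_trans (min_dist_parallelogram (Mk a) (Mk b)) _.
have small k : (N <= k)%N -> (8 * dist + 4) * k.+1%:R^-1 < e ^+ 2.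
  by move=> /Nbound; rewrite ltr_pdivlMr // mulrC.
have inv_ge0 k : 0 <= k.+1%:R^-1 :> R by rewrite invr_ge0.
have inv_le1 k : k.+1%:R^-1 <= 1 :> R by rewrite invf_le1 ?ler1n.
move: dist_ge0 (small _ Na) (small _ Nb) (mk_min a) (mk_min b).
move: (inv_ge0 a) (inv_ge0 b) (inv_le1 a) (inv_le1 b).
move: (ipnorm_ge0 ip (x - mk a)) (ipnorm_ge0 ip (x - mk b)).
move: (nm (x - mk a)) (nm (x - mk b)) (a.+1%:R^-1) (b.+1%:R^-1) => A B ia ib.
by move=> *; nra.
Qed.

End MinimalDistance.

Lemma exists_min_dist x : P x ->
  exists2 m, M m & forall m', M m' -> nm (x - m) <= nm (x - m').
Proof.
move=> Px; pose dists : set R := fun r => exists2 m, M m & r = nm (x - m).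
have dists_ge0 : lbound dists 0 by move=> r [m _ ->]; exact: ipnorm_ge0.
have dists0 : dists (nm (x - 0)) by exists 0; first exact: subspace0.
have has_inf_dists : has_inf dists by split; [exists (nm (x - 0)) | exists 0].
set dist := inf dists.
have dist_lb m : M m -> dist <= nm (x - m).
  by move=> Mm; apply: ge_inf; [exists 0 | exists m].
have dist_ge0 : 0 <= dist by apply: lb_le_inf; first exists (nm (x - 0)).
have near_inf k : exists m, M m /\ nm (x - m) < dist + k.+1%:R^-1.
  have inv_gt0 : 0 < k.+1%:R^-1 :> R by rewrite invr_gt0.
  by have [_ [m Mm ->]] := inf_adherent inv_gt0 has_inf_dists; exists m.
have [mk /all_and2[Mk mk_min]] := choice near_inf.
have [m [Pm mk_m]] := cP (fun k => MP (Mk k))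
  (minimizing_seq_cauchy Px dist_ge0 dist_lb Mk mk_min).
have Mm := M_closed Mk Pm mk_m.
exists m => // m' Mm'; apply: le_trans (dist_lb _ Mm').
apply: (@ler_addMgt0r _ 2) => d d_gt0.
have [N1 N1_inv] := eventually_invS_lt d_gt0; have [N2 N2_conv] := mk_m _ d_gt0.
pose k := maxn N1 N2.
have tri := ipnormD_le sP ipP (subspaceB sP Px (MP (Mk k))) (subspaceB sP (MP (Mk k)) Pm).
rewrite addrA subrK in tri.
have := mk_min k; have := N1_inv k (leq_maxl _ _); have := N2_conv k (leq_maxr _ _).
move: tri; clearbody dist.
by move: (nm (x - m)) (nm (x - mk k)) (nm (mk k - m)) (k.+1%:R^-1) => *; lra.
Qed.

Lemma orthogonal_projection x : P x ->
  exists2 m, M m & forall u, M u -> ip (x - m) u = 0.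
Proof.
move=> Px; have [m Mm m_min] := exists_min_dist Px.
by exists m => //; apply: min_dist_orthogonal.
Qed.

End Projection.

Definition linear_functional_on (R : realType) (W : lmodType R[i]) (P : W -> Prop)
    (l : W -> R[i]) : Prop :=
  forall a x y, P x -> P y -> l (a *: x + y) = a * l x + l y.

Definition continuous_at_0 (R : realType) (W : lmodType R[i]) (P : W -> Prop)
    (n : W -> R) (l : W -> R[i]) : Prop :=
  forall e, 0 < e -> exists2 d, 0 < d & forall x, P x -> n x < d -> cabs (l x) < e.

Definition pairing_onto_dual (R : realType) (W : lmodType R[i]) (Pmp : W -> Prop)
    (nmp : W -> R) (Ppm : W -> Prop) (pair : W -> W -> R[i]) : Prop :=
  forall l, linear_functional_on Pmp l -> continuous_at_0 Pmp nmp l ->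
    exists2 g, Ppm g & forall y, Pmp y -> l y = pair y g.

Lemma bounded_continuous_at_0 (R : realType) (W : lmodType R[i]) (P : W -> Prop)
    (ip : W -> W -> R[i]) (l : W -> R[i]) (K : R) :
  (forall x, P x -> cabs (l x) <= K * ipnorm ip x) -> continuous_at_0 P (ipnorm ip) l.
Proof.
move=> l_le e e_gt0; have K1_gt0 : 0 < `|K| + 1 by rewrite ltr_wpDl.
exists (e / (`|K| + 1)) => [|x Px x_lt]; first by rewrite divr_gt0.
have := l_le x Px; have := ler_norm K; have := ipnorm_ge0 ip x.
rewrite ltr_pdivlMr // in x_lt; move: x_lt.
by move: (ipnorm ip x) (cabs (l x)) `|K| => n c k *; nra.
Qed.

Section Riesz.
Variables (R : realType) (W : lmodType R[i]) (P : W -> Prop) (ip : W -> W -> R[i]).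
Hypotheses (sP : subspace P) (ipP : inner_product_on P ip) (cP : complete_on P (ipnorm ip)).
Local Notation nm := (ipnorm ip).
Variable l : W -> R[i].
Hypotheses (l_lin : linear_functional_on P l) (l_cont : continuous_at_0 P nm l).

Lemma linear_functional0 : l 0 = 0.
Proof.
have := l_lin 1 (subspace0 sP) (subspace0 sP).
by rewrite scaler0 addr0 mul1r -{1}[l 0]addr0 => /addrI <-.
Qed.

Lemma linear_functionalZ a x : P x -> l (a *: x) = a * l x.
Proof.
move=> Px; rewrite -[a *: x]addr0 l_lin ?linear_functional0 ?addr0 //.
exact: subspace0.
Qed.

Lemma linear_functionalB x y : P x -> P y -> l (x - y) = l x - l y.
Proof. by move=> Px Py; rewrite -scaleN1r addrC l_lin // mulN1r addrC. Qed.

Lemma linear_functional_kernel_closed u x : (forall k, P (u k) /\ l (u k) = 0) -> P x ->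
  converges_to nm u x -> l x = 0.
Proof.
move=> ker_u Px ux; apply: (@cabs_small_eq0 _ 1) => e e_gt0; rewrite mul1r ltW //.
have [d d_gt0 small] := l_cont e_gt0; have [N uN] := ux _ d_gt0.
have [Pu lu] := ker_u N; have := small _ (subspaceB sP Px Pu).
by rewrite linear_functionalB // lu subr0 (ipnormBC sP ipP Px Pu); apply; apply: uN.
Qed.

Theorem riesz_representation : exists2 y, P y & forall x, P x -> l x = ip x y.
Proof.
pose ker x := P x /\ l x = 0.
have ker_sub : subspace ker.
  split; first by split; [apply: subspace0 | apply: linear_functional0].
  move=> a x y [Px lx] [Py ly].
  by split; [apply: subspaceZD | rewrite l_lin // lx ly mulr0 addr0].
have [l0|/existsNP[x0 /not_implyP[Px0 /eqP lx0]]] := pselect (forall x, P x -> l x = 0).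
  by exists 0 => [|x Px]; [apply: subspace0 | rewrite l0 // (ip0r sP ipP)].
have ker_closed u x : (forall k, ker (u k)) -> P x -> converges_to nm u x -> ker x.
  by move=> ker_u Px ux; split => //; exact: (linear_functional_kernel_closed ker_u Px ux).
have [m [Pm lm] z_orth] :=
  orthogonal_projection sP ipP cP ker_sub (fun _ => @proj1 _ _) ker_closed Px0.
set z := x0 - m in z_orth; have Pz : P z := subspaceB sP Px0 Pm.
have lz_neq0 : l z != 0 by rewrite linear_functionalB // lm subr0.
have z_neq0 : z != 0 by apply: contraNneq lz_neq0 => ->; rewrite linear_functional0.
have zz_neq0 : ip z z != 0.
  rewrite (ipxx sP ipP Pz); apply: contraNneq z_neq0 => /(congr1 (@complex.Re R)) /=.
  by move=> /eqP; rewrite sqrf_eq0 => /eqP /(ipnorm_eq0 sP ipP Pz) ->.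
exists (conjc (l z / ip z z) *: z) => [|x Px]; first exact: subspaceZ.
have Pv : P (x - (l x / l z) *: z) by apply: subspaceB => //; apply: subspaceZ.
have : ip (x - (l x / l z) *: z) z = 0.
  rewrite (ip_conj ipP Pz Pv) z_orth ?conjc0 //; split => //.
  by rewrite linear_functionalB ?linear_functionalZ ?divfK ?subrr //; apply: subspaceZ.
rewrite (ipBl ipP Px (subspaceZ sP _ Pz) Pz) (ipZl sP ipP _ Pz Pz) => /eqP.
rewrite subr_eq0 (ipZr sP ipP _ Pz Px) conjcK => /eqP ->; field.
by rewrite lz_neq0 zz_neq0.
Qed.

End Riesz.

Section MixedOrderDuality.
Variables (R : realType) (W : lmodType R[i]).
Variables (PH Pmp Ppm : W -> Prop) (ipH ipmp ippm pair : W -> W -> R[i]).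
Hypothesis ipH_ip : inner_product_on PH ipH.
Hypotheses (smp : subspace Pmp) (ipmp_ip : inner_product_on Pmp ipmp).
Hypothesis cmp : complete_on Pmp (ipnorm ipmp).
Hypotheses (spm : subspace Ppm) (ippm_ip : inner_product_on Ppm ippm).
Hypothesis cpm : complete_on Ppm (ipnorm ippm).
Local Notation nmp := (ipnorm ipmp).
Local Notation npm := (ipnorm ippm).
Hypothesis dense_mp : dense_in (tilde PH Pmp) Pmp nmp.
Hypothesis dense_pm : dense_in (tilde PH Ppm) Ppm npm.
Hypothesis sup_pm : forall h, tilde PH Ppm h ->
  is_sup_of (fun r => exists g, [/\ tilde PH Pmp g, g <> 0 & r = cabs (ipH g h) / nmp g])
    (npm h).
Hypothesis sup_mp : forall h, tilde PH Pmp h ->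
  is_sup_of (fun r => exists g, [/\ tilde PH Ppm g, g <> 0 & r = cabs (ipH g h) / npm g])
    (nmp h).
Hypothesis pair_linear : forall h, Ppm h -> linear_functional_on Pmp (pair^~ h).
Hypothesis pair_antilinear : forall a x y z, Pmp x -> Ppm y -> Ppm z ->
  pair x (a *: y + z) = conjc a * pair x y + pair x z.
Variable c : R.
Hypothesis c_ge0 : 0 <= c.
Hypothesis pair_bounded :
  forall x y, Pmp x -> Ppm y -> cabs (pair x y) <= c * nmp x * npm y.
Hypothesis pair_ip : forall x y, tilde PH Pmp x -> tilde PH Ppm y -> pair x y = ipH x y.

Lemma pairBl x y h : Pmp x -> Pmp y -> Ppm h -> pair (x - y) h = pair x h - pair y h.
Proof. by move=> Px Py Ph; apply: (linear_functionalB (pair_linear Ph)). Qed.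

Lemma pairBr x h g : Pmp x -> Ppm h -> Ppm g -> pair x (h - g) = pair x h - pair x g.
Proof.
by move=> Px Ph Pg; rewrite -scaleN1r addrC pair_antilinear // rmorphN1 mulN1r addrC.
Qed.

(* [y = J h]: the Riesz representative in [H_{-,+}] of the functional [pair^~ h]. *)
Definition pair_rep h y := [/\ Ppm h, Pmp y & forall x, Pmp x -> pair x h = ipmp x y].

Lemma pair_rep_exists h : Ppm h -> exists y, pair_rep h y.
Proof.
move=> Ph; have cont : continuous_at_0 Pmp nmp (pair^~ h).
  apply: (@bounded_continuous_at_0 _ _ _ _ _ (c * npm h)) => x Px.
  by rewrite mulrAC; apply: pair_bounded.
by have [y Py rep] := riesz_representation smp ipmp_ip cmp (pair_linear Ph) cont; exists y.
Qed.

Lemma pair_repZD a h1 y1 h2 y2 : pair_rep h1 y1 -> pair_rep h2 y2 ->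
  pair_rep (a *: h1 + h2) (a *: y1 + y2).
Proof.
move=> [Ph1 Py1 rep1] [Ph2 Py2 rep2].
split; [exact: subspaceZD | exact: subspaceZD |] => x Px.
by rewrite pair_antilinear // rep1 // rep2 // (ipZDr smp ipmp_ip).
Qed.

Lemma pair_repB h1 y1 h2 y2 : pair_rep h1 y1 -> pair_rep h2 y2 ->
  pair_rep (h1 - h2) (y1 - y2).
Proof.
by move=> rep1 rep2; have := pair_repZD (-1) rep2 rep1; rewrite !scaleN1r ![- _ + _]addrC.
Qed.

Lemma pair_rep_le h y : pair_rep h y -> nmp y <= c * npm h.
Proof.
move=> [Ph Py rep]; have := pair_bounded Py Ph; rewrite rep // (ipxx smp ipmp_ip Py).
rewrite /cabs /= expr0n addr0 sqrtr_sqr ger0_norm ?sqr_ge0 // mulrAC.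
move: (ipnorm_ge0 ipmp y) (mulr_ge0 c_ge0 (ipnorm_ge0 ippm h)).
by move: (nmp y) (c * npm h) => n K *; nra.
Qed.

Lemma pair_annihilator z : Pmp z -> (forall h, Ppm h -> pair z h = 0) -> z = 0.
Proof.
move=> Pz z_ann; apply: (ipnorm_eq0 smp ipmp_ip Pz); apply/eqP.
rewrite eq_le ipnorm_ge0 andbT; apply: (@ler_addMgt0r _ (c + 1)) => d d_gt0.
have [y [[Hy Py] zy_lt]] := dense_mp Pz d_gt0.
have y_le : nmp y <= c * nmp (z - y).
  apply: (proj2 (sup_mp (conj Hy Py))) => _ [g [[Hg Pg] g_neq0 ->]].
  rewrite ler_pdivrMr ?(ipnorm_gt0 spm ippm_ip) // (ip_conj ipH_ip) // cabs_conj.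
  rewrite -pair_ip // -[pair y g]subr0 -(z_ann _ Pg) -pairBl //.
  by rewrite (ipnormBC smp ipmp_ip Pz Py); apply: pair_bounded => //; apply: subspaceB.
have tri := ipnormD_le smp ipmp_ip (subspaceB smp Pz Py) Py; rewrite subrK in tri.
have := ipnorm_ge0 ipmp (z - y).
by move: c_ge0 zy_lt y_le tri; move: (nmp z) (nmp y) (nmp (z - y)) => *; nra.
Qed.

Lemma pair_rep_ge_tilde h y : tilde PH Ppm h -> pair_rep h y -> npm h <= nmp y.
Proof.
move=> Hh [Ph Py rep]; apply: (proj2 (sup_pm Hh)) => _ [g [[Hg Pg] g_neq0 ->]].
rewrite ler_pdivrMr ?(ipnorm_gt0 smp ipmp_ip) // -pair_ip // rep // mulrC.
exact: (ip_cauchy_schwarz smp ipmp_ip).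
Qed.

Lemma pair_rep_ge h y : pair_rep h y -> npm h <= nmp y.
Proof.
move=> rep; have [Ph Py _] := rep; apply: (@ler_addMgt0r _ (c + 1)) => d d_gt0.
have [h' [[Hh' Ph'] hh'_lt]] := dense_pm Ph d_gt0.
have [y' rep'] := pair_rep_exists Ph'; have [_ Py' _] := rep'.
have ge' := pair_rep_ge_tilde (conj Hh' Ph') rep'.
have le' := pair_rep_le (pair_repB rep' rep); rewrite (ipnormBC spm ippm_ip Ph' Ph) in le'.
have tri_h := ipnormD_le spm ippm_ip (subspaceB spm Ph Ph') Ph'; rewrite subrK in tri_h.
have tri_y := ipnormD_le smp ipmp_ip Py (subspaceB smp Py' Py); rewrite addrC subrK in tri_y.
move: c_ge0 hh'_lt ge' le' tri_h tri_y (ipnorm_ge0 ippm (h - h')).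
by move: (npm h) (npm h') (npm (h - h')) (nmp y) (nmp y') (nmp (y' - y)) => *; nra.
Qed.

Lemma pair_rep_closed u y : (forall k, exists h, pair_rep h (u k)) -> Pmp y ->
  converges_to nmp u y -> exists h, pair_rep h y.
Proof.
move=> reps Py uy; have [f rep_f] := choice reps.
have Pu k : Pmp (u k) by case: (rep_f k).
have Pf k : Ppm (f k) by case: (rep_f k).
have f_cauchy : cauchy_seq npm f.
  move=> e e_gt0; have [N uN] := converges_cauchy smp ipmp_ip Pu Py uy e_gt0.
  exists N => a b Na Nb.
  exact: le_lt_trans (pair_rep_ge (pair_repB (rep_f a) (rep_f b))) (uN _ _ Na Nb).
have [g [Pg fg]] := cpm Pf f_cauchy.
exists g; split => // x Px; apply/eqP; rewrite -subr_eq0; apply/eqP.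
apply: (@cabs_small_eq0 _ ((1 + c) * nmp x)) => d d_gt0.
have [N1 fN1] := fg _ d_gt0; have [N2 uN2] := uy _ d_gt0.
pose k := maxn N1 N2; have [_ _ rep_k] := rep_f k.
have -> : pair x g - ipmp x y = ipmp x (u k - y) - pair x (f k - g).
  by rewrite pairBr // (ipBr smp ipmp_ip) // rep_k //; ring.
apply: le_trans (cabsB_le _ _) _.
have := ip_cauchy_schwarz smp ipmp_ip Px (subspaceB smp (Pu k) Py).
have := pair_bounded Px (subspaceB spm (Pf k) Pg).
move: (fN1 k (leq_maxl _ _)) (uN2 k (leq_maxr _ _)) (ipnorm_ge0 ipmp x).
move: (mulr_ge0 c_ge0 (ipnorm_ge0 ipmp x)).
by move: (nmp x) (nmp (u k - y)) (npm (f k - g)) => *; nra.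
Qed.

Lemma pair_rep0 : pair_rep 0 0.
Proof.
have P0 := subspace0 spm; split; [exact: P0 | exact: subspace0 |] => x Px.
by have := pairBr Px P0 P0; rewrite subrr (ip0r smp ipmp_ip) // => ->; rewrite subrr.
Qed.

Lemma pair_rep_surj y : Pmp y -> exists h, pair_rep h y.
Proof.
move=> Py; pose range y := exists h, pair_rep h y.
have range_sub : subspace range.
  split; first by exists 0; apply: pair_rep0.
  by move=> a y1 y2 [h1 rep1] [h2 rep2]; exists (a *: h1 + h2); apply: pair_repZD.
have range_mp x : range x -> Pmp x by case=> h [].
have [m [g rep_g] y_orth] :=
  orthogonal_projection smp ipmp_ip cmp range_sub range_mp pair_rep_closed Py.
have [_ Pm _] := rep_g; suff -> : y = m by exists g.
apply/eqP; rewrite -subr_eq0; apply/eqP.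
apply: pair_annihilator => [|h Ph]; first exact: subspaceB.
have [yh rep_h] := pair_rep_exists Ph; have [_ _ ->] := rep_h; last exact: subspaceB.
by apply: y_orth; exists h.
Qed.

Theorem mixed_order_pairing_onto_dual : pairing_onto_dual Pmp nmp Ppm pair.
Proof.
move=> l l_lin l_cont; have [yl Pyl l_yl] := riesz_representation smp ipmp_ip cmp l_lin l_cont.
have [g [Pg _ rep_g]] := pair_rep_surj Pyl.
by exists g => // y Py; rewrite l_yl // rep_g.
Qed.

End MixedOrderDuality.

Section PairingAdjoint.
Variables (R : realType) (W : lmodType R[i]).
Variables (PH Pmp Ppm : W -> Prop) (ipH ipmp pair : W -> W -> R[i]) (V Vinv Vsharp : W -> W).
Hypotheses (sH : subspace PH) (ipH_ip : inner_product_on PH ipH) (spm : subspace Ppm).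
Local Notation nH := (ipnorm ipH).
Local Notation nmp := (ipnorm ipmp).
Hypothesis V_Pmp : forall x, PH x -> Pmp (V x).
Hypothesis V_lin : forall a x y, PH x -> PH y -> V (a *: x + y) = a *: V x + V y.
Hypothesis Vinv_cont : forall x0, PH x0 -> forall e : R, 0 < e -> exists d : R, 0 < d /\
  forall x, PH x -> nmp (V x - V x0) < d -> nH (x - x0) < e.
Hypothesis Vinv_inv : inverse_on PH Pmp V Vinv.
Hypothesis Vsharp_adj : pairing_adjoint PH Ppm ipH pair V Vsharp.
Hypothesis pair_antilinear : forall a x y z, Pmp x -> Ppm y -> Ppm z ->
  pair x (a *: y + z) = conjc a * pair x y + pair x z.

Lemma Vinv_PH y : Pmp y -> PH (Vinv y). Proof. by move=> /(proj2 Vinv_inv) []. Qed.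

Lemma VinvV x : PH x -> Vinv (V x) = x. Proof. exact: (proj1 Vinv_inv). Qed.

Lemma VVinv y : Pmp y -> V (Vinv y) = y. Proof. by move=> /(proj2 Vinv_inv) []. Qed.

Lemma Vinv_linear a y1 y2 : Pmp y1 -> Pmp y2 ->
  Vinv (a *: y1 + y2) = a *: Vinv y1 + Vinv y2.
Proof.
move=> P1 P2; have PH1 := Vinv_PH P1; have PH2 := Vinv_PH P2.
by rewrite -{1}(VVinv P1) -{1}(VVinv P2) -V_lin // VinvV //; apply: subspaceZD.
Qed.

Lemma Vsharp_PH g : Ppm g -> PH (Vsharp g). Proof. exact: (proj1 Vsharp_adj). Qed.

Lemma pair_VinvVsharp y g : Pmp y -> Ppm g -> pair y g = ipH (Vinv y) (Vsharp g).
Proof. by move=> Py Pg; rewrite -(proj2 Vsharp_adj) ?VVinv //; apply: Vinv_PH. Qed.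

Lemma Vsharp_linear a g1 g2 : Ppm g1 -> Ppm g2 ->
  Vsharp (a *: g1 + g2) = a *: Vsharp g1 + Vsharp g2.
Proof.
move=> P1 P2; have P12 := subspaceZD spm a P1 P2.
have PH1 := Vsharp_PH P1; have PH2 := Vsharp_PH P2.
apply: (ip_inj_r sH ipH_ip (Vsharp_PH P12) (subspaceZD sH a PH1 PH2)).
move=> f Pf; rewrite (ipZDr sH ipH_ip) // -!(proj2 Vsharp_adj) //.
by apply: pair_antilinear => //; apply: V_Pmp.
Qed.

Lemma ip_Vinv_continuous_at_0 h : PH h ->
  continuous_at_0 Pmp nmp (fun y => ipH (Vinv y) h).
Proof.
move=> Ph e e_gt0; have nh1_gt0 : 0 < nH h + 1 by rewrite ltr_wpDl ?ipnorm_ge0.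
have [d [d_gt0 small]] := Vinv_cont (subspace0 sH) (divr_gt0 e_gt0 nh1_gt0).
exists d => // y Py y_lt; have PVy := Vinv_PH Py.
have V0 : V 0 = 0.
  have P0 := subspace0 sH; have := V_lin 1 P0 P0.
  by rewrite !scale1r addr0 => /esym/eqP; rewrite -subr_eq0 addrK => /eqP.
have := small _ PVy; rewrite VVinv // V0 !subr0 => /(_ y_lt).
rewrite ltr_pdivlMr // => Vy_lt.
apply: le_lt_trans (ip_cauchy_schwarz sH ipH_ip PVy Ph) _.
move: (ipnorm_ge0 ipH h) (ipnorm_ge0 ipH (Vinv y)) Vy_lt.
by move: (nH h) (nH (Vinv y)) => *; nra.
Qed.

Lemma Vsharp_surj : pairing_onto_dual Pmp nmp Ppm pair ->
  forall h, PH h -> exists2 g, Ppm g & Vsharp g = h.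
Proof.
move=> pair_represents h Ph.
have l_lin : linear_functional_on Pmp (fun y => ipH (Vinv y) h).
  by move=> a y1 y2 P1 P2; rewrite Vinv_linear // (ipZDl ipH_ip) //; apply: Vinv_PH.
have [g Pg l_g] := pair_represents _ l_lin (ip_Vinv_continuous_at_0 Ph).
exists g => //; apply: (ip_inj_r sH ipH_ip (Vsharp_PH Pg) Ph) => f Pf.
by rewrite -(proj2 Vsharp_adj) // -l_g ?VinvV //; apply: V_Pmp.
Qed.

Lemma boundary_triple_of_m_boundary_tuple (X : lmodType R[i]) (ipX : X -> X -> R[i])
    (DA : X -> Prop) (A Astar : X -> X) (G0 G1 : X -> W) :
  pairing_onto_dual Pmp nmp Ppm pair ->
  m_boundary_tuple ipX DA A Astar Pmp Ppm pair G0 G1 ->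
  boundary_triple ipX DA A Astar PH ipH (Vinv \o G0) (Vsharp \o G1).
Proof.
move=> pair_onto [G_maps G_lin M1 M2].
split => [f Df | a f g Df Dg | h0 h1 Ph0 Ph1 | f g Df Dg] /=.
- by have [G0f G1f] := G_maps f Df; split; [apply: Vinv_PH | apply: Vsharp_PH].
- have [[G0f G1f] [G0g G1g]] := (G_maps f Df, G_maps g Dg).
  by have [-> ->] := G_lin a f g Df Dg; split; [apply: Vinv_linear | apply: Vsharp_linear].
- have [g Pg <-] := Vsharp_surj pair_onto Ph1.
  have [f [Df G0f G1f]] := M1 _ _ (V_Pmp Ph0) Pg.
  by exists f; rewrite /= G0f G1f VinvV.
- have [[G0f G1f] [G0g G1g]] := (G_maps f Df, G_maps g Dg).
  rewrite M2 // /pair_rev /cconj !pair_VinvVsharp //.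
  by rewrite -(ip_conj ipH_ip) //; [apply: Vinv_PH | apply: Vsharp_PH].
Qed.

End PairingAdjoint.

Theorem proposition6p2 (R : realType)
  (X : lmodType R[i]) (ipX : X -> X -> R[i])
  (DA : X -> Prop) (A Astar : X -> X)
  (W : lmodType R[i]) (PH Pmp Ppm : W -> Prop) (ipH ipmp ippm : W -> W -> R[i])
  (pair : W -> W -> R[i]) (G0 G1 : X -> W) (V Vinv Vsharp : W -> W) :
  hilbert_on (fun _ : X => True) ipX ->
  closed_densely_defined_symmetric ipX DA A ->
  is_adjoint ipX DA A Astar ->
  mixed_order_duality PH Pmp Ppm ipH ipmp ippm ->
  pairing_extension PH Pmp Ppm ipH ipmp ippm pair ->
  m_boundary_tuple ipX DA A Astar Pmp Ppm pair G0 G1 ->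
  linear_homeomorphism PH (ipnorm ipH) Pmp (ipnorm ipmp) V ->
  inverse_on PH Pmp V Vinv ->
  pairing_adjoint PH Ppm ipH pair V Vsharp ->
  boundary_triple ipX DA A Astar PH ipH (Vinv \o G0) (Vsharp \o G1).
Proof.
move=> _ _ _ [[[sH ipH_ip _] [smp ipmp_ip cmp] [spm ippm_ip cpm]]
  [_ dense_mp _ dense_pm] _ [sup_pm sup_mp]].
case=> pair_lin pair_antilin [c pair_bounded] pair_ip m_tuple.
case=> [[V_Pmp V_lin] _ _ _ Vinv_cont] Vinv_inv Vsharp_adj.
have pair_bounded_abs x y : Pmp x -> Ppm y ->
    cabs (pair x y) <= `|c| * ipnorm ipmp x * ipnorm ippm y.
  move=> Px Py; apply: le_trans (pair_bounded x y Px Py) _.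
  by rewrite -!mulrA ler_wpM2r ?ler_norm // mulr_ge0 ?ipnorm_ge0.
have pair_onto := mixed_order_pairing_onto_dual ipH_ip smp ipmp_ip cmp spm ippm_ip cpm
  dense_mp dense_pm sup_pm sup_mp (fun h Ph a x y Px Py => pair_lin a x y h Px Py Ph)
  pair_antilin (normr_ge0 c) pair_bounded_abs pair_ip.
exact: (boundary_triple_of_m_boundary_tuple sH ipH_ip spm V_Pmp V_lin Vinv_cont
  Vinv_inv Vsharp_adj pair_antilin pair_onto m_tuple).
Qed.
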